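(* Let $G$ be a graph such that the subgraph $G_\Delta$ induced by the vertices of maximum degree $\Delta(G)$ is acyclic. Then for every integer $t>\Delta(G)$, any proper $t$-edge coloring of $G$ can be transformed into a proper $\Delta(G)$-edge coloring of $G$ by a sequence of interchanges.
   Context: All graphs are finite, without loops and multiple edges. $\Delta(G)$ is the maximum degree of $G$. A proper $t$-edge coloring of $G$ is a map $f:E(G)\to\{1,\dots,t\}$ with $f(e)\neq f(e')$ for adjacent edges $e,e'$; a proper $\Delta(G)$-edge coloring obtained in this way is one using only colors from $\{1,\dots,\Delta(G)\}$. For a proper edge coloring $f$ and colors $a,b$, $G_f(a,b)$ is the subgraph induced by the edges colored $a$ or $b$. An interchange (Kempe change) consists of swapping colors $a$ and $b$ on one connected component of $G_f(a,b)$. *)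

(* A simple graph is a symmetric irreflexive relation e on a finType T. *)
From Stdlib Require Import Relations.
From mathcomp Require Import all_boot.
Set Implicit Arguments. Unset Strict Implicit. Unset Printing Implicit Defensive.

Section Graph.
Variables (T : finType) (e : rel T).

Definition is_edge (E : {set T}) : bool :=
  [exists x, exists y, e x y && (E == [set x; y])].

Definition deg (x : T) : nat := #|[set y | e x y]|.

Definition Delta : nat := \max_(x : T) deg x.

(* edge colorings: maps from edges (2-sets) to colors; values off edges are irrelevant *)
Definition coloring := {set T} -> nat.

Definition proper_coloring (k : nat) (f : coloring) : Prop :=
  (forall E, is_edge E -> 1 <= f E <= k) /\
  (forall E E', is_edge E -> is_edge E' -> E != E' -> E :&: E' != set0 ->
     f E != f E').

Definition abrel (f : coloring) (a b : nat) : rel T :=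
  fun x y => e x y && ((f [set x; y] == a) || (f [set x; y] == b)).

Definition swap_col (a b c : nat) : nat :=
  if c == a then b else if c == b then a else c.

(* one interchange (Kempe change) with colors a, b in {1..t}: swap a and b on the
   component of G_f(a,b) containing the vertex v *)
Definition kempe_step (t : nat) (f g : coloring) : Prop :=
  exists a b : nat, exists v : T,
    [/\ 1 <= a <= t, 1 <= b <= t &
     forall E, is_edge E ->
       g E = if [exists x in E, connect (abrel f a b) v x]
             then swap_col a b (f E) else f E].

Definition max_deg_acyclic : Prop :=
  forall s : seq T, uniq s -> 3 <= size s -> all (fun x => deg x == Delta) s ->
    ~~ cycle e s.

End Graph.

From Stdlib Require Import Relations Classical.
From mathcomp Require Import all_boot zify.
Set Implicit Arguments. Unset Strict Implicit. Unset Printing Implicit Defensive.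

(* Start from a coloring reachable by interchanges that minimizes the number of edges
   colored above [Delta] ("high" edges), and suppose it has a high edge [x y]. Vizing's
   fan argument, run with interchanges that never create new high edges, moves the high
   color from [x y] onto an edge [x z] with [z <> y] and [deg z = Delta]: the fan at [x]
   can be extended as long as its last vertex has degree below [Delta], and rotating it
   shifts the high color to its last edge. Hence every vertex of [G_Delta] carrying a high
   edge in such a minimal coloring has two neighbours in [G_Delta] with the same property,
   which forces a cycle in [G_Delta]. *)

Lemma rt_argmin (A : Type) (R : relation A) (m : A -> nat) (x : A) :
  exists y, clos_refl_trans A R x y /\
            forall z, clos_refl_trans A R y z -> m y <= m z.
Proof.
have [n] := ubnP (m x); elim: n x => // n IH x /ltnSE le_mx.
case: (classic (exists y, clos_refl_trans A R x y /\ m y < m x)) => [[y [xy lt_yx]]|hno].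
  have [z [yz zmin]] := IH y (leq_trans lt_yx le_mx).
  by exists z; split => //; apply: rt_trans xy yz.
exists x; split=> [|z xz]; first exact: rt_refl.
by rewrite leqNgt; apply/negP => lt; apply: hno; exists z.
Qed.

Lemma sum_gt0P (I : finType) (F : I -> nat) : 0 < \sum_i F i -> exists i, 0 < F i.
Proof. by rewrite lt0n sum_nat_eq0 => /forallPn [i /= hi]; exists i; rewrite lt0n. Qed.

Lemma sum_pred1 (I : finType) (P : pred I) v : P v -> \sum_(w | P w) (w == v : nat) = 1.
Proof. by move=> hv; rewrite (bigD1 v) //= eqxx big1 // => w /andP [_ /negbTE ->]. Qed.

Section Leaves.
Variables (T : finType) (r : rel T).

Definition leaf (u : T) : Prop := forall a b, r u a -> r u b -> a = b.

Hypothesis r_sym : symmetric r.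

Lemma connect_closed_set (A : {set T}) v w :
  (forall u u', r u u' -> u \in A -> u' \in A) -> connect r v w -> v \in A -> w \in A.
Proof.
move=> hA hc hv; suff cl : closed r (mem A) by rewrite -(closed_connect cl hc).
move=> u u' ru; apply/idP/idP; first exact: hA.
by apply: hA; rewrite r_sym.
Qed.

Hypothesis r_deg2 : forall w a b c, r w a -> r w b -> r w c -> a = b \/ a = c \/ b = c.

Lemma uniq_paths_prefix p : forall q z w,
  (forall a b, r w a -> r w b -> a != z -> b != z -> a = b) ->
  path r w p -> path r w q -> z \notin p -> z \notin q ->
  uniq (w :: p) -> uniq (w :: q) ->
  (exists s, q = p ++ s) \/ (exists s, p = q ++ s).
Proof.
elim: p => [|a p IH] q z w hw pp pq zp zq up uq; first by left; exists q.
case: q pq zq uq => [|b q] pq zq uq; first by right; exists (a :: p).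
move: pp pq => /andP [wa pp] /andP [wb pq].
move: zp zq; rewrite !inE !negb_or => /andP [za zp] /andP [zb zq].
have ab : a = b by apply: hw; rewrite // eq_sym.
subst b.
move: up uq => /andP [wap up] /andP [waq uq].
move: wap waq; rewrite !inE !negb_or => /andP [_ wp] /andP [_ wq].
have haw : forall a1 b1, r a a1 -> r a b1 -> a1 != w -> b1 != w -> a1 = b1.
  move=> a1 b1 h1 h2 n1 n2.
  have h3 : r a w by rewrite r_sym.
  case: (r_deg2 h1 h2 h3) => [//|[e1|e1]]; first by rewrite e1 eqxx in n1.
  by rewrite e1 eqxx in n2.
case: (IH q w a haw pp pq wp wq up uq) => [[s ->]|[s ->]].
  by left; exists s.
by right; exists s.
Qed.

Lemma leaf_not_inner u v w p s : leaf v ->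
  path r u (p ++ s) -> uniq (u :: p ++ s) -> last u p = v -> v != u ->
  last v s = w -> w != v -> False.
Proof.
move=> hv pth un lp vu ls wv.
case: s pth un ls wv => [|b s] pth un ls wv; first by rewrite /= -ls eqxx in wv.
case/lastP: p pth un lp vu => [|p x] pth un lp vu; first by rewrite /= -lp eqxx in vu.
rewrite last_rcons in lp; subst x.
rewrite cat_path rcons_path last_rcons /= in pth.
move: pth => /andP [/andP [_ hpv] /andP [hvb _]].
have hvp : r v (last u p) by rewrite r_sym.
have eb := hv _ _ hvp hvb.
move: un; rewrite -cat_cons cat_uniq => /and3P [_ /hasPn hn _].
have := hn b; rewrite inE eqxx /= => /(_ isT).
by rewrite -eb -rcons_cons mem_rcons inE mem_last orbT.
Qed.

Lemma no_three_connected_leaves u v w : leaf u -> leaf v -> leaf w ->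
  v != w -> v != u -> w != u -> connect r u v -> connect r u w -> False.
Proof.
move=> hu hv hw vw vu wu /connectP [p0 pp0 lp0] /connectP [q0 pq0 lq0].
case: (shortenP pp0) lp0 => p pp up _ lp0.
case: (shortenP pq0) lq0 => q pq uq _ lq0.
have hu' : forall a b, r u a -> r u b -> a != u -> b != u -> a = b.
  by move=> a b ha hb _ _; apply: hu.
have ul : forall s, uniq (u :: s) -> u \notin s by move=> s /andP [].
case: (uniq_paths_prefix hu' pp pq (ul _ up) (ul _ uq) up uq) => [[s qe]|[s pe]].
  subst q.
  have ls : last v s = w by rewrite lq0 last_cat lp0.
  have wv : w != v by rewrite eq_sym.
  exact: (leaf_not_inner hv pq uq (esym lp0) vu ls wv).
subst p.
have ls : last w s = v by rewrite lp0 last_cat lq0.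
exact: (leaf_not_inner hw pp up (esym lq0) wu ls vw).
Qed.

End Leaves.

Section Cycles.
Variables (T : finType) (e : rel T) (P : T -> Prop).
Hypotheses (e_sym : symmetric e) (e_irr : irreflexive e).
Hypothesis P_two_nbrs : forall w, P w -> exists a b, [/\ a != b, e w a, e w b, P a & P b].

Local Notation has_P_cycle :=
  (exists s, [/\ uniq s, 3 <= size s, (forall y, y \in s -> P y) & cycle e s]).

Lemma extend_path_or_cycle h q0 q : uniq (h :: q0 :: q) -> path e h (q0 :: q) ->
  (forall y, y \in h :: q0 :: q -> P y) ->
  has_P_cycle \/ exists u, [/\ u \notin h :: q0 :: q, e u h & P u].
Proof.
move=> uq pq Pq.
have [u [hu Pu uq0]] : exists u, [/\ e h u, P u & u != q0].
  have [a [b [ab ha hb Pa Pb]]] := P_two_nbrs (Pq h (mem_head _ _)).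
  case: (eqVneq a q0) => [aq|aq]; last by exists a.
  by exists b; split => //; rewrite -aq eq_sym.
case: (boolP (u \in h :: q0 :: q)) => uin; last by right; exists u; rewrite e_sym.
left; set q1 := q0 :: q in uq pq Pq uin.
have uinq : u \in q1.
  move: uin; rewrite inE => /orP [/eqP uh|//].
  by move: hu; rewrite uh e_irr.
set k := index u q1.
have hk : k < size q1 by rewrite index_mem.
have k0 : k != 0.
  apply/eqP => hk0; have := nth_index h uinq; rewrite -/k hk0 /= => hu0.
  by rewrite hu0 eqxx in uq0.
exists (h :: take k.+1 q1); split.
- move: uq; rewrite cons_uniq => /andP [hq uq]; rewrite cons_uniq take_uniq // andbT.
  by apply: contra hq; apply: mem_take.
- by rewrite /= size_takel //; case: (k) k0.
- move=> y; rewrite inE => /orP [/eqP ->|/mem_take hy]; apply: Pq.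
    exact: mem_head.
  by rewrite inE hy orbT.
rewrite /cycle rcons_path (take_path _ pq) andTb (take_nth h hk) last_rcons.
by rewrite nth_index // e_sym.
Qed.

Lemma long_path_or_cycle w0 n : P w0 -> has_P_cycle \/
  exists h q, [/\ uniq (h :: q), size q = n.+1, path e h q & forall y, y \in h :: q -> P y].
Proof.
move=> Pw0; elim: n => [|n IHn].
  right; have [a [b [_ ha _ Pa _]]] := P_two_nbrs Pw0.
  exists a, [:: w0]; split => //=.
  - by rewrite inE andbT; apply/eqP => aw; move: ha; rewrite aw e_irr.
  - by rewrite e_sym ha.
  by move=> y; rewrite !inE => /orP [/eqP ->|/eqP ->].
case: IHn => [|[h [q [uq sq pq Pq]]]]; first by left.
case: q uq sq pq Pq => [//|q0 q] uq sq pq Pq.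
case: (extend_path_or_cycle uq pq Pq) => [|[u [uin hu Pu]]]; first by left.
right; exists u, (h :: q0 :: q); split.
- by rewrite cons_uniq uin uq.
- by move: sq => /= [->].
- by rewrite [path _ _ _]/= hu; exact: pq.
by move=> y; rewrite inE => /orP [/eqP ->//|]; apply: Pq.
Qed.

Lemma exists_cycle w0 : P w0 -> has_P_cycle.
Proof.
move=> /(long_path_or_cycle #|T|) [//|[h [q [uq sq _ _]]]].
have := max_card (mem (h :: q)).
by move/card_uniqP: uq => ->; rewrite /= sq ltnNge leqnSn.
Qed.

End Cycles.

Section Colorings.
Variables (T : finType) (e : rel T).
Hypotheses (e_sym : symmetric e) (e_irr : irreflexive e).

Local Notation D := (Delta e).
Local Notation proper := (proper_coloring e).

Lemma set2C (x y : T) : [set x; y] = [set y; x].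
Proof. by apply/setP=> z; rewrite !inE orbC. Qed.

Lemma is_edge2 x y : e x y -> is_edge e [set x; y].
Proof. by move=> h; apply/existsP; exists x; apply/existsP; exists y; rewrite h eqxx. Qed.

Lemma is_edgeP E : is_edge e E -> exists x y, e x y /\ E = [set x; y].
Proof. by case/existsP=> x /existsP [y /andP [h /eqP ->]]; exists x, y. Qed.

Lemma is_edge_at E w : is_edge e E -> w \in E -> exists u, e w u /\ E = [set w; u].
Proof.
case/is_edgeP=> x [y [exy ->]] /set2P [->|->]; first by exists y.
by exists x; rewrite e_sym set2C.
Qed.

Lemma deg_le_Delta x : deg e x <= D.
Proof. exact: (leq_bigmax (F := deg e) x). Qed.

Lemma deg_sum w : deg e w = \sum_u (e w u : nat).
Proof.
rewrite /deg -sum1_card big_mkcond /=; apply: eq_bigr => u _.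
by rewrite inE; case: (e w u).
Qed.

Lemma proper_col_inj g k w a b : proper k g -> e w a -> e w b ->
  g [set w; a] = g [set w; b] -> a = b.
Proof.
move=> [_ pr] ha hb heq; apply/eqP; apply: contraT => nab.
have hne : [set w; a] != [set w; b].
  apply: contra nab => /eqP hE.
  have : a \in [set w; b] by rewrite -hE set22.
  case/set2P=> [aw|->//]; by move: ha; rewrite aw e_irr.
have := pr _ _ (is_edge2 ha) (is_edge2 hb) hne.
rewrite heq eqxx; apply => //.
by apply/set0Pn; exists w; rewrite !inE eqxx.
Qed.

Lemma proper_col_range g k x y : proper k g -> e x y -> 1 <= g [set x; y] <= k.
Proof. by move=> [h _] exy; apply: h; apply: is_edge2. Qed.

Definition ncol (g : coloring T) (w : T) (a : nat) : nat :=
  \sum_(u : T) (e w u && (g [set w; u] == a)).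

Definition nhigh (g : coloring T) (w : T) : nat :=
  \sum_(u : T) (e w u && (D < g [set w; u])).

(* Twice the number of edges colored above [Delta]. *)
Definition excess (g : coloring T) : nat := \sum_(w : T) nhigh g w.

Lemma ncol_eq0P g w a : reflect (forall u, e w u -> g [set w; u] != a) (ncol g w a == 0).
Proof.
rewrite /ncol sum_nat_eq0; apply: (iffP forallP) => h u.
  by move=> hu; have := h u; rewrite hu /= eqb0.
by case hu: (e w u) => //=; rewrite eqb0 h.
Qed.

Lemma missing_col_neq g w a u : ncol g w a = 0 -> e w u -> g [set w; u] != a.
Proof. by move/eqP/ncol_eq0P; apply. Qed.

Lemma ncol_gt0 g w a : 0 < ncol g w a -> exists u, e w u /\ g [set w; u] = a.
Proof.
rewrite lt0n => /ncol_eq0P h.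
apply: NNPP => hn; apply: h => u hu; apply/eqP => ha; apply: hn; by exists u.
Qed.

Lemma ncol_le1 g k w a : proper k g -> ncol g w a <= 1.
Proof.
move=> pr; case: (boolP (ncol g w a == 0)) => [/eqP -> //|].
rewrite -lt0n => /ncol_gt0 [u [hu hc]].
rewrite /ncol (bigD1 u) //= hu hc eqxx /= big1 // => v nvu.
case hv: (e w v) => //=; case: eqP => // hcv.
by move/eqP: nvu; case; apply: (proper_col_inj pr hv hu); rewrite hcv hc.
Qed.

Lemma ncol_eq1 g k w a u : proper k g -> e w u -> g [set w; u] = a -> ncol g w a = 1.
Proof.
move=> pr hu hc; apply/eqP; rewrite eqn_leq (ncol_le1 _ _ pr) lt0n.
by apply/ncol_eq0P => h; have := h u hu; rewrite hc eqxx.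
Qed.

Lemma nhigh_gt0 g x y : e x y -> D < g [set x; y] -> 0 < nhigh g x.
Proof. by move=> hxy hc; rewrite /nhigh (bigD1 y) //= hxy hc. Qed.

Lemma sum_ord_eq_succ n c : \sum_(a < n) (c == a.+1) = (0 < c <= n).
Proof.
elim: n => [|n IH]; first by rewrite big_ord0; case: c.
rewrite big_ord_recr /= IH {IH}; case: c => [|c] //=; rewrite eqSS.
case: (ltngtP c n) => h //=.
- by rewrite ltnS ltnW.
- by rewrite ltnS leqNgt h.
by rewrite h ltnSn.
Qed.

(* Counting: the colors [1..Delta] present at [w], plus its high edges, are at most [deg w]. *)
Lemma exists_missing_col g k w : proper k g -> (0 < nhigh g w \/ deg e w < D) ->
  exists a, 1 <= a <= D /\ ncol g w a = 0.
Proof.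
move=> pr hyp; apply: NNPP => hn.
have hall : forall a : 'I_D, 1 <= ncol g w a.+1.
  move=> a; rewrite lt0n; apply/negP => /eqP h0; apply: hn.
  by exists a.+1; split => //; rewrite ltn_ord.
have hdeg : \sum_(a < D) ncol g w a.+1 + nhigh g w <= deg e w.
  rewrite deg_sum /ncol /nhigh exchange_big /= -big_split /=; apply: leq_sum => u _.
  case hu: (e w u) => /=; last by rewrite big1.
  have /andP [h1 h2] := proper_col_range pr hu.
  rewrite sum_ord_eq_succ h1 /=; case: leqP => //=.
have : D <= \sum_(a < D) ncol g w a.+1.
  rewrite -[X in X <= _]card_ord -sum1_card; apply: leq_sum => a _; exact: hall.
have := deg_le_Delta w; case: hyp; lia.
Qed.

Lemma excess0_proper g k : proper k g -> excess g = 0 -> proper D g.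
Proof.
move=> pr ex0; split; last exact: (proj2 pr).
move=> E hE; have [x [y [exy ->]]] := is_edgeP hE.
have /andP [h1 _] := proper_col_range pr exy.
rewrite h1 /= leqNgt; apply/negP => hD.
have := nhigh_gt0 exy hD.
suff : nhigh g x <= excess g by rewrite ex0 leqn0 => /eqP ->.
by rewrite /excess (bigD1 x) //= leq_addr.
Qed.

Lemma swap_colK a b c : swap_col a b (swap_col a b c) = c.
Proof.
rewrite /swap_col; case: (eqVneq c a) => [->|ca].
  by case: (eqVneq b a) => [->|ba]; rewrite ?eqxx // (negbTE ba) eqxx.
case: (eqVneq c b) => [->|cb]; first by rewrite eqxx.
by rewrite (negbTE ca) (negbTE cb).
Qed.

Lemma swap_col_id a b c : c != a -> c != b -> swap_col a b c = c.
Proof. by move=> ca cb; rewrite /swap_col (negbTE ca) (negbTE cb). Qed.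

Lemma swap_col_range a b c k : 1 <= a <= k -> 1 <= b <= k -> 1 <= c <= k ->
  1 <= swap_col a b c <= k.
Proof. by rewrite /swap_col; case: ifP => // _; case: ifP. Qed.

Definition kempe_swap (g : coloring T) a b v : coloring T := fun E =>
  if [exists x in E, connect (abrel e g a b) v x] then swap_col a b (g E) else g E.

Local Notation K g a b v := (connect (abrel e g a b) v).

Lemma abrel_sym g a b : symmetric (abrel e g a b).
Proof. by move=> x y; rewrite /abrel e_sym set2C. Qed.

Lemma abrelC g a b : abrel e g a b =2 abrel e g b a.
Proof. by move=> x y; rewrite /abrel orbC. Qed.

Lemma abrel_deg_le2 g k a b w p q s : proper k g ->
  abrel e g a b w p -> abrel e g a b w q -> abrel e g a b w s ->
  p = q \/ p = s \/ q = s.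
Proof.
move=> pr /andP [hp cp] /andP [hq cq] /andP [hs cs].
have sc := proper_col_inj pr.
case: (eqVneq (g [set w; p]) (g [set w; q])) => hpq; first by left; exact: sc hp hq hpq.
case: (eqVneq (g [set w; p]) (g [set w; s])) => hps; first by right; left; exact: sc hp hs hps.
right; right; apply: sc hq hs _.
move: cp cq cs hpq hps.
move: (g [set w; p]) (g [set w; q]) (g [set w; s]) => x1 x2 x3.
by move=> /orP[/eqP->|/eqP->] /orP[/eqP->|/eqP->] /orP[/eqP->|/eqP->]; rewrite ?eqxx.
Qed.

Lemma abrel_leaf g k a b w : proper k g -> ncol g w b = 0 -> leaf (abrel e g a b) w.
Proof.
move=> pr hb p q /andP [hp cp] /andP [hq cq].
have cp' : g [set w; p] = a.
  by case/orP: cp => /eqP // h; move: (missing_col_neq hb hp); rewrite h eqxx.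
have cq' : g [set w; q] = a.
  by case/orP: cq => /eqP // h; move: (missing_col_neq hb hq); rewrite h eqxx.
by apply: (proper_col_inj pr hp hq); rewrite cp' cq'.
Qed.

Lemma abrel_leafC g k a b w : proper k g -> ncol g w a = 0 -> leaf (abrel e g a b) w.
Proof. by move=> pr h0 p q; rewrite (abrelC g a b w p) (abrelC g a b w q); exact: (@abrel_leaf g k b a w pr h0). Qed.

Lemma kempe_chain_pair g a b x y w :
  (forall u, abrel e g a b x u -> u = y) -> (forall u, abrel e g a b y u -> u = x) ->
  K g a b x w -> w = x \/ w = y.
Proof.
move=> hx hy hw.
have : w \in [set x; y].
  apply: (connect_closed_set (abrel_sym g a b)) hw _; last by rewrite set21.
  move=> u u' hu /set2P [eu|eu]; subst u.
    by rewrite (hx _ hu) set22.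
  by rewrite (hy _ hu) set21.
by case/set2P; [left|right].
Qed.

Lemma kempe_chain_missing_edge g k a x y w : proper k g -> e x y ->
  ncol g x a = 0 -> ncol g y a = 0 -> K g a (g [set x; y]) x w -> w = x \/ w = y.
Proof.
move=> pr hxy hxa hya; apply: kempe_chain_pair => u /andP [hu /orP [/eqP h|/eqP h]].
- by move: (missing_col_neq hxa hu); rewrite h eqxx.
- exact: (proper_col_inj pr hu hxy).
- by move: (missing_col_neq hya hu); rewrite h eqxx.
have hyx : e y x by rewrite e_sym.
by apply: (proper_col_inj pr hu hyx); rewrite h set2C.
Qed.

Lemma kempe_swap_in g a b v x y : K g a b v x ->
  kempe_swap g a b v [set x; y] = swap_col a b (g [set x; y]).
Proof.
move=> hx; rewrite /kempe_swap; case: ifP => //; case/existsP.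
by exists x; rewrite set21 hx.
Qed.

Lemma kempe_swap_out g a b v x y : e x y -> ~~ K g a b v x ->
  kempe_swap g a b v [set x; y] = g [set x; y].
Proof.
move=> exy hx; rewrite /kempe_swap; case: ifP => // /existsP [z /andP [/set2P [->|->] hz]].
  by rewrite hz in hx.
have hK c : g [set x; y] = c -> (c == a) || (c == b) -> K g a b v x.
  move=> hc hcab; apply: connect_trans hz (connect1 _).
  by rewrite abrel_sym /abrel exy hc.
case: (eqVneq (g [set x; y]) a) => ha; first by rewrite (hK _ ha) ?eqxx in hx.
case: (eqVneq (g [set x; y]) b) => hb; first by rewrite (hK _ hb) ?eqxx ?orbT in hx.
by rewrite swap_col_id.
Qed.

Lemma kempe_swap_id g a b v E : g E != a -> g E != b -> kempe_swap g a b v E = g E.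
Proof. by move=> ha hb; rewrite /kempe_swap; case: ifP => //; rewrite swap_col_id. Qed.

Lemma kempe_swap_step g k a b v : 1 <= a <= k -> 1 <= b <= k ->
  kempe_step e k g (kempe_swap g a b v).
Proof. by move=> ha hb; exists a, b, v; split. Qed.

Lemma kempe_swap_proper g k a b v : proper k g -> 1 <= a <= k -> 1 <= b <= k ->
  proper k (kempe_swap g a b v).
Proof.
move=> pr ha hb; split.
  move=> E hE; have [x [y [exy ->]]] := is_edgeP hE.
  have hr := proper_col_range pr exy.
  case: (boolP (K g a b v x)) => hx; first by rewrite kempe_swap_in // swap_col_range.
  by rewrite kempe_swap_out.
move=> E E' hE hE' nE /set0Pn [w]; rewrite inE => /andP [wE wE'].
have [u [hu E1]] := is_edge_at hE wE; have [u' [hu' E2]] := is_edge_at hE' wE'.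
rewrite E1 E2 in nE *.
have ne0 : [set w; u] :&: [set w; u'] != set0.
  by apply/set0Pn; exists w; rewrite !inE !eqxx.
have hne := (proj2 pr) _ _ (is_edge2 hu) (is_edge2 hu') nE ne0.
case: (boolP (K g a b v w)) => hw; last by rewrite !kempe_swap_out.
rewrite !kempe_swap_in //; apply: contra hne => /eqP h.
by apply/eqP; rewrite -[g [set w; u]](swap_colK a b) h swap_colK.
Qed.

Lemma kempe_step_proper g g' k : proper k g -> kempe_step e k g g' -> proper k g'.
Proof.
move=> pr [a [b [v [ha hb hE]]]].
have pk := kempe_swap_proper v pr ha hb.
split=> [E he|E E' he he' nE ne]; rewrite ?hE //; first exact: (proj1 pk).
exact: (proj2 pk).
Qed.

Lemma kempe_reach_proper f g k : proper k f ->
  clos_refl_trans (coloring T) (kempe_step e k) f g -> proper k g.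
Proof.
move=> pf h; elim: h pf => // [x y st|x y z _ IH1 _ IH2] px.
  exact: kempe_step_proper st.
exact: IH2 (IH1 px).
Qed.

Lemma ncol_kempe_swap_in g a b v w d : K g a b v w ->
  ncol (kempe_swap g a b v) w d = ncol g w (swap_col a b d).
Proof.
move=> hw; apply: eq_bigr => u _; rewrite kempe_swap_in //.
congr (nat_of_bool (_ && _)); apply/eqP/eqP => [<-|->]; by rewrite swap_colK.
Qed.

Lemma ncol_kempe_swap_out g a b v w d : ~~ K g a b v w ->
  ncol (kempe_swap g a b v) w d = ncol g w d.
Proof.
move=> hw; apply: eq_bigr => u _.
by case hu: (e w u) => //=; rewrite kempe_swap_out.
Qed.

Lemma ncol_kempe_swap_id g a b v w d : d != a -> d != b ->
  ncol (kempe_swap g a b v) w d = ncol g w d.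
Proof.
move=> da db; case: (boolP (K g a b v w)) => hw; last by rewrite ncol_kempe_swap_out.
by rewrite ncol_kempe_swap_in // swap_col_id.
Qed.

Lemma nhigh_kempe_swap_out g a b v w : ~~ K g a b v w ->
  nhigh (kempe_swap g a b v) w = nhigh g w.
Proof.
move=> hw; apply: eq_bigr => u _.
by case hu: (e w u) => //=; rewrite kempe_swap_out.
Qed.

Lemma nhigh_kempe_swap_low g a b v w : a <= D -> b <= D ->
  nhigh (kempe_swap g a b v) w = nhigh g w.
Proof.
move=> ha hb; case: (boolP (K g a b v w)) => hw; last by rewrite nhigh_kempe_swap_out.
apply: eq_bigr => u _; rewrite kempe_swap_in //; congr (nat_of_bool (_ && _)).
rewrite /swap_col; case: eqP => [->|_]; first by rewrite !ltnNge ha hb.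
by case: eqP => [->|_] //; rewrite !ltnNge ha hb.
Qed.

Lemma nhigh_kempe_swap_in g a b v w : a <= D -> D < b -> K g a b v w ->
  nhigh (kempe_swap g a b v) w + ncol g w b = nhigh g w + ncol g w a.
Proof.
move=> ha hb hw; rewrite /nhigh /ncol -!big_split /=; apply: eq_bigr => u _.
rewrite kempe_swap_in //; case: (e w u) => //=.
rewrite /swap_col; case: (eqVneq (g [set w; u]) a) => [->|ca].
  have ab : (a == b) = false by apply/negbTE; rewrite neq_ltn (leq_ltn_trans ha hb).
  by rewrite hb ab ltnNge ha.
case: (eqVneq (g [set w; u]) b) => [cb|cb]; first by rewrite cb ltnNge ha hb.
by rewrite addn0.
Qed.

Lemma excess_kempe_swap_low g a b v : a <= D -> b <= D ->
  excess (kempe_swap g a b v) = excess g.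
Proof. by move=> ha hb; apply: eq_bigr => w _; apply: nhigh_kempe_swap_low. Qed.

(* Swapping a low color [a] with a high color [b] on a chain trades the [b]-edges of the
   chain for its [a]-edges, each counted at both ends. *)
Lemma excess_kempe_swap g a b v : a <= D -> D < b ->
  excess (kempe_swap g a b v) + \sum_(w | K g a b v w) ncol g w b =
  excess g + \sum_(w | K g a b v w) ncol g w a.
Proof.
move=> ha hb; rewrite /excess (bigID (fun w => K g a b v w)) /=.
rewrite [\sum_w nhigh g w](bigID (fun w => K g a b v w)) /=.
have e1 : \sum_(w | K g a b v w) nhigh (kempe_swap g a b v) w +
          \sum_(w | K g a b v w) ncol g w b =
          \sum_(w | K g a b v w) nhigh g w + \sum_(w | K g a b v w) ncol g w a.
  by rewrite -!big_split; apply: eq_bigr => w hw; apply: nhigh_kempe_swap_in.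
have e2 : \sum_(w | ~~ K g a b v w) nhigh (kempe_swap g a b v) w =
          \sum_(w | ~~ K g a b v w) nhigh g w.
  by apply: eq_bigr => w hw; apply: nhigh_kempe_swap_out.
lia.
Qed.

(* The only vertex other than [v] at which the chain could have more [a]-edges than
   [b]-edges is its other end, and [v] has one more [b]-edge than [a]-edges. *)
Lemma excess_kempe_swap_missing g k a b v : proper k g -> a <= D -> D < b ->
  ncol g v a = 0 -> ncol g v b = 1 -> excess (kempe_swap g a b v) <= excess g.
Proof.
move=> pr aD hb hva hvb.
have := excess_kempe_swap g v aD hb.
suff : \sum_(w | K g a b v w) ncol g w a <= \sum_(w | K g a b v w) ncol g w b by lia.
have rsym := abrel_sym g a b.
have rdeg2 w p q s := @abrel_deg_le2 g k a b w p q s pr.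
have bad_leaf w : ncol g w b < ncol g w a -> leaf (abrel e g a b) w.
  by move=> hw; apply: (abrel_leaf pr); move: hw (ncol_le1 w a pr); lia.
case: (boolP [exists z, K g a b v z && (ncol g z b < ncol g z a)]); last first.
  move=> /existsPn hn; apply: leq_sum => w Kw.
  by move: (hn w); rewrite Kw /= -leqNgt.
case/existsP => z /andP [Kz bz].
have zv : z != v by apply: contraTneq bz => ->; rewrite hva hvb.
have key w : K g a b v w -> ncol g w a + (w == v) <= ncol g w b + (w == z).
  move=> Kw; case: (eqVneq w v) => [->|wv]; first by rewrite hva hvb.
  case: (eqVneq w z) => [->|wz]; first by have := ncol_le1 z a pr; lia.
  rewrite !addn0 leqNgt; apply/negP => bw.
  exact: (no_three_connected_leaves rsym rdeg2 (abrel_leafC pr hva)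
           (bad_leaf _ bw) (bad_leaf _ bz) wz wv zv Kw Kz).
have : \sum_(w | K g a b v w) (ncol g w a + (w == v)) <=
       \sum_(w | K g a b v w) (ncol g w b + (w == z)) by apply: leq_sum.
rewrite !big_split /= !sum_pred1 ?connect0 //; lia.
Qed.

End Colorings.

Section Optimal.
Variables (T : finType) (e : rel T).
Hypotheses (e_sym : symmetric e) (e_irr : irreflexive e).
Variables (t : nat) (f0 : coloring T).

Local Notation D := (Delta e).
Local Notation proper := (proper_coloring e).
Local Notation K g a b v := (connect (abrel e g a b) v).
Local Notation ncol := (ncol e).
Local Notation nhigh := (nhigh e).
Local Notation excess := (excess e).
Local Notation kempe_swap := (kempe_swap e).
Local Notation reach := (clos_refl_trans (coloring T) (kempe_step e t)).

Hypothesis f0_proper : proper t f0.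
Hypothesis f0_min : forall g, reach f0 g -> excess f0 <= excess g.

Definition optimal g := reach f0 g /\ excess g <= excess f0.

Lemma optimal_proper g : optimal g -> proper t g.
Proof. by case=> h _; exact: kempe_reach_proper f0_proper h. Qed.

Lemma optimal_kempe_swap g a b v : optimal g -> 1 <= a <= t -> 1 <= b <= t ->
  excess (kempe_swap g a b v) <= excess g -> optimal (kempe_swap g a b v).
Proof.
move=> [r1 p1] ha hb hp; split; last exact: leq_trans hp p1.
by apply: rt_trans r1 _; apply: rt_step; exact: kempe_swap_step.
Qed.

Lemma optimal_kempe_swap_low g a b v : optimal g -> D < t ->
  1 <= a <= D -> 1 <= b <= D -> optimal (kempe_swap g a b v).
Proof.
move=> sg Dt /andP [a1 aD] /andP [b1 bD]; apply: optimal_kempe_swap => //.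
- by rewrite a1 (leq_trans aD (ltnW Dt)).
- by rewrite b1 (leq_trans bD (ltnW Dt)).
by rewrite excess_kempe_swap_low.
Qed.

Lemma optimal_kempe_swap_ge g a b v : optimal g -> 1 <= a <= t -> 1 <= b <= t ->
  excess g <= excess (kempe_swap g a b v).
Proof.
move=> [r1 p1] ha hb; apply: leq_trans p1 (f0_min _).
by apply: rt_trans r1 _; apply: rt_step; exact: kempe_swap_step.
Qed.

(* The [(a, g(x y))]-chain of [x] is the edge [x y] alone, and swapping it would make
   that edge low. *)
Lemma optimal_high_edge_missing g x y a : optimal g -> e x y -> D < g [set x; y] ->
  1 <= a <= D -> ncol g x a = 0 -> ncol g y a = 0 -> False.
Proof.
move=> sg hxy hc /andP [a1 aD] hxa hya.
have pr := optimal_proper sg.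
have /andP [c1 ct] := proper_col_range pr hxy.
have ha : 1 <= a <= t by rewrite a1 (leq_trans aD (ltnW (leq_trans hc ct))).
have hct : 1 <= g [set x; y] <= t by rewrite c1 ct.
have := optimal_kempe_swap_ge x sg ha hct.
have := excess_kempe_swap e_sym g x aD hc.
have s0 : \sum_(w | K g a (g [set x; y]) x w) ncol g w a = 0.
  by apply: big1 => w /(kempe_chain_missing_edge e_sym e_irr pr hxy hxa hya) [->|->].
have s1 : 0 < \sum_(w | K g a (g [set x; y]) x w) ncol g w (g [set x; y]).
  by rewrite (bigD1 x) ?connect0 //= (ncol_eq1 e_irr pr hxy erefl).
lia.
Qed.

Definition fan g x ys : Prop :=
  [/\ 0 < size ys, uniq ys, (forall i, i < size ys -> e x (nth x ys i)),
      D < g [set x; nth x ys 0] &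
      forall i, i.+1 < size ys -> 1 <= g [set x; nth x ys i.+1] <= D /\
         ncol g (nth x ys i) (g [set x; nth x ys i.+1]) = 0].

Lemma fan_take g x ys k : fan g x ys -> 0 < k -> k <= size ys -> fan g x (take k ys).
Proof.
move=> [s0 u0 ad hi co] k0 ks.
have sz : size (take k ys) = k by rewrite size_takel.
split; rewrite ?sz //.
- exact: take_uniq.
- by move=> i ik; rewrite nth_take //; apply: ad; apply: leq_trans ks.
- by rewrite nth_take.
move=> i ik; rewrite !nth_take //; last exact: ltnW.
by apply: co; apply: leq_trans ks.
Qed.

Lemma fan_rcons g x ys u : fan g x ys -> e x u -> u \notin ys ->
  1 <= g [set x; u] <= D -> ncol g (nth x ys (size ys).-1) (g [set x; u]) = 0 ->
  fan g x (rcons ys u).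
Proof.
move=> [s0 u0 ad hi co] hu nu hl hm.
have sz : size (rcons ys u) = (size ys).+1 by rewrite size_rcons.
split; rewrite ?sz //.
- by rewrite rcons_uniq nu.
- move=> i; rewrite ltnS leq_eqVlt nth_rcons => /orP [/eqP ->|hi'].
    by rewrite ltnn eqxx.
  by rewrite hi'; apply: ad.
- by rewrite nth_rcons s0.
move=> i; rewrite ltnS leq_eqVlt => /orP [/eqP hi'|hi'].
  rewrite !nth_rcons hi' ltnn eqxx -hi' /= ltnSn.
  by split => //; move: hm; rewrite -hi' /=.
by rewrite !nth_rcons hi' (ltnW hi'); apply: co.
Qed.

Lemma fan_transfer g g' x ys : fan g x ys ->
  (forall i, i < size ys -> g' [set x; nth x ys i] = g [set x; nth x ys i]) ->
  (forall i, i.+1 < size ys -> ncol g' (nth x ys i) (g [set x; nth x ys i.+1]) =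
                               ncol g (nth x ys i) (g [set x; nth x ys i.+1])) ->
  fan g' x ys.
Proof.
move=> [s0 u0 ad hi co] h1 h2; split => //; first by rewrite h1.
by move=> i hi'; rewrite h1 // h2 //; apply: co.
Qed.

Lemma fan_col_neq g x ys i j : proper t g -> fan g x ys -> i < size ys -> j < size ys ->
  i != j -> g [set x; nth x ys i] != g [set x; nth x ys j].
Proof.
move=> pr [s0 u0 ad _ _] hi hj nij; apply/eqP => heq.
have := proper_col_inj e_irr pr (ad _ hi) (ad _ hj) heq.
by move/eqP; rewrite nth_uniq // (negbTE nij).
Qed.

Lemma fan_neq_root g x ys i : fan g x ys -> i < size ys -> nth x ys i != x.
Proof. by move=> [_ _ ad _ _] hi; apply/eqP => h; have := ad _ hi; rewrite h e_irr. Qed.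

Lemma fan_Delta_lt g x ys : proper t g -> fan g x ys -> D < t.
Proof.
move=> pr [s0 _ ad hi _]; have /andP [_ ct] := proper_col_range pr (ad 0 s0).
exact: leq_trans hi ct.
Qed.

(* Swapping [a] with the color [b] of [x y_(m+1)] only recolors that edge, so [b] becomes
   missing at [x] and at [y_m], on the shorter fan. *)
Lemma fan_missing_root_last m : forall g x ys a, optimal g -> fan g x ys ->
  size ys = m.+1 -> 1 <= a <= D -> ncol g x a = 0 -> ncol g (nth x ys m) a = 0 -> False.
Proof.
elim: m => [|m IH] g x ys a sg fg sz ha hxa hya.
  by case: (fg) => s0 _ ad hi _; exact: (optimal_high_edge_missing sg (ad 0 s0) hi ha).
have pr := optimal_proper sg.
have Dt := fan_Delta_lt pr fg.
case: (fg) => s0 u0 ad hi co.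
have hm : m.+1 < size ys by rewrite sz.
have [hb hbm] := co m hm.
set ym := nth x ys m.+1 in hb hbm.
set b := g [set x; ym] in hb hbm.
have hxym : e x ym by apply: ad.
have ba : b != a by apply: missing_col_neq hxa hxym.
have KK := kempe_chain_missing_edge e_sym e_irr pr hxym hxa hya.
have sg' := optimal_kempe_swap_low x sg Dt ha hb.
set g' := kempe_swap g a b x in sg'.
have fg' : fan g' x (take m.+1 ys).
  have fg1 := fan_take fg (ltn0Sn m) (ltnW hm).
  apply: (fan_transfer fg1) => i; rewrite size_takel ?(ltnW hm) // => hi'.
    rewrite nth_take // /g' kempe_swap_id //.
      by apply: missing_col_neq hxa (ad _ (ltn_trans hi' hm)).
    apply: (fan_col_neq pr fg) => //; first exact: ltn_trans hi' hm.
    by rewrite neq_ltn hi'.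
  have hi2 : i.+1 < size ys by apply: ltn_trans hi' hm.
  rewrite !nth_take // ?(ltnW hi') // /g' ncol_kempe_swap_id //.
    by apply: missing_col_neq hxa (ad _ hi2).
  by apply: (fan_col_neq pr fg) => //; rewrite neq_ltn hi'.
apply: (IH g' x (take m.+1 ys) b sg' fg' _ hb).
- by rewrite size_takel // ltnW.
- by rewrite /g' ncol_kempe_swap_in ?connect0 // /swap_col (negbTE ba) eqxx.
rewrite nth_take // /g' ncol_kempe_swap_out //.
apply/negP => /KK [h|h].
  by move: (fan_neq_root fg (ltnW hm)); rewrite h eqxx.
move/eqP: h; rewrite /ym nth_uniq //; last exact: ltnW.
by rewrite eqn_leq ltnn andbF.
Qed.

Lemma fan_missing_root g x ys k a : optimal g -> fan g x ys -> k < size ys ->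
  1 <= a <= D -> ncol g x a = 0 -> ncol g (nth x ys k) a = 0 -> False.
Proof.
move=> sg fg hk ha hxa hya.
apply: (fan_missing_root_last (m := k) sg (fan_take fg (ltn0Sn k) hk)) ha hxa _.
  by rewrite size_takel.
by rewrite nth_take.
Qed.

Section FanMissing.
Variables (g : coloring T) (x : T) (ys : seq T).
Hypotheses (g_opt : optimal g) (g_fan : fan g x ys).

Definition no_shared_missing j := forall l i a, l != i -> l < j -> i < j ->
  1 <= a <= D -> ncol g (nth x ys l) a = 0 -> ncol g (nth x ys i) a = 0 -> False.

Lemma fan_next_col_neq j l i a : no_shared_missing j -> l != i -> l < j -> i < j ->
  l.+1 < size ys -> 1 <= a <= D -> ncol g (nth x ys i) a = 0 ->
  g [set x; nth x ys l.+1] != a.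
Proof.
move=> IH nli lj ij hl ha hia; case: g_fan => _ _ _ _ co.
have [_ hml] := co l hl; apply/eqP => hca; rewrite hca in hml.
exact: (IH l i a nli lj ij ha hml hia).
Qed.

Lemma fan_chain_ends i j a c : i < j -> j < size ys -> ncol g x c = 0 ->
  ncol g (nth x ys i) a = 0 -> ncol g (nth x ys j) a = 0 ->
  K g a c x (nth x ys i) -> ~~ K g a c x (nth x ys j).
Proof.
move=> ij js hxc hia hja Ki; apply/negP.
have pr := optimal_proper g_opt.
have i_lt : i < size ys by apply: ltn_trans ij js.
apply: (no_three_connected_leaves (abrel_sym e_sym g a c)) Ki.
- by move=> w p q s; apply: (abrel_deg_le2 e_irr pr).
- exact: (abrel_leaf e_irr pr hxc).
- exact: (abrel_leafC e_irr pr hia).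
- exact: (abrel_leafC e_irr pr hja).
- by case: g_fan => _ u0 _ _ _; rewrite nth_uniq // neq_ltn ij.
- exact: fan_neq_root g_fan i_lt.
- exact: fan_neq_root g_fan js.
Qed.

(* [x], [y_i] and [y_j] are ends of [(a, c)]-chains, so if [y_i] lies on the chain of [x]
   then swapping on the chain of [y_j] makes [c] missing at both [x] and [y_j]. *)
Lemma fan_missing_twice_chain j i a c : no_shared_missing j -> i < j -> j < size ys ->
  1 <= a <= D -> 1 <= c <= D -> ncol g x c = 0 ->
  ncol g (nth x ys i) a = 0 -> ncol g (nth x ys j) a = 0 -> K g a c x (nth x ys i) -> False.
Proof.
move=> IH ij js ha hc hxc hia hja Ki.
have pr := optimal_proper g_opt.
have Dt := fan_Delta_lt pr g_fan.
case: (g_fan) => s0 u0 ad hi co.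
have i_lt : i < size ys by apply: ltn_trans ij js.
have ca : c != a.
  apply/eqP => eca; subst c.
  exact: (fan_missing_root g_opt g_fan i_lt ha hxc hia).
have rsym := abrel_sym e_sym g a c.
have Kj := fan_chain_ends ij js hxc hia hja Ki.
have Kx : ~~ K g a c (nth x ys j) x by rewrite (sym_connect_sym rsym).
have Kyi : ~~ K g a c (nth x ys j) (nth x ys i).
  apply: contra Kj => h; apply: connect_trans Ki _.
  by rewrite (sym_connect_sym rsym).
have sg' := optimal_kempe_swap_low (nth x ys j) g_opt Dt ha hc.
set g' := kempe_swap g a c (nth x ys j) in sg'.
have fg1 := fan_take g_fan (ltn0Sn j) js.
have fg' : fan g' x (take j.+1 ys).
  apply: (fan_transfer fg1) => l; rewrite size_takel // => hl.
    by rewrite nth_take // /g' kempe_swap_out //; apply: ad; apply: leq_trans hl js.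
  have hl2 : l.+1 < size ys by apply: leq_trans hl js.
  rewrite !nth_take // ?(ltnW hl) //.
  case: (boolP (K g a c (nth x ys j) (nth x ys l))) => Kl; last first.
    by rewrite /g' ncol_kempe_swap_out.
  have nli : l != i by apply: contraNneq Kyi => <-.
  rewrite /g' ncol_kempe_swap_id //; first exact: (fan_next_col_neq IH nli).
  exact: missing_col_neq hxc (ad _ hl2).
apply: (fan_missing_root_last (m := j) sg' fg' _ hc).
- by rewrite size_takel.
- by rewrite /g' ncol_kempe_swap_out.
by rewrite nth_take // /g' ncol_kempe_swap_in ?connect0 // /swap_col (negbTE ca) eqxx.
Qed.

(* Otherwise swapping on the chain of [x] makes [a] missing at both [x] and [y_i]. *)
Lemma fan_missing_twice_nochain j i a c : no_shared_missing j -> i < j -> j < size ys ->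
  1 <= a <= D -> 1 <= c <= D -> ncol g x c = 0 ->
  ncol g (nth x ys i) a = 0 -> ~~ K g a c x (nth x ys i) -> False.
Proof.
move=> IH ij js ha hc hxc hia Ki.
have pr := optimal_proper g_opt.
have Dt := fan_Delta_lt pr g_fan.
case: (g_fan) => s0 u0 ad hi co.
have i_lt : i < size ys by apply: ltn_trans ij js.
have sg' := optimal_kempe_swap_low x g_opt Dt ha hc.
set g' := kempe_swap g a c x in sg'.
have nxa : forall l, l <= i -> g [set x; nth x ys l] != a.
  case=> [|l] hl.
    by apply/eqP => h; move: hi; rewrite h ltnNge; case/andP: ha => _ ->.
  apply: (fan_next_col_neq IH _ (ltn_trans hl ij) ij) => //; last exact: leq_ltn_trans hl i_lt.
  by rewrite neq_ltn hl.
have fg1 := fan_take g_fan (ltn0Sn i) i_lt.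
have fg' : fan g' x (take i.+1 ys).
  apply: (fan_transfer fg1) => l; rewrite size_takel // => hl.
    rewrite nth_take // /g' kempe_swap_id //; first exact: nxa.
    by apply: missing_col_neq hxc _; apply: ad; apply: leq_trans hl i_lt.
  have hl2 : l.+1 < size ys by apply: leq_trans hl i_lt.
  rewrite !nth_take // ?(ltnW hl) // /g' ncol_kempe_swap_id //; first exact: nxa.
  exact: missing_col_neq hxc (ad _ hl2).
apply: (fan_missing_root_last (m := i) sg' fg' _ ha).
- by rewrite size_takel.
- by rewrite /g' ncol_kempe_swap_in ?connect0 // /swap_col eqxx.
by rewrite nth_take // /g' ncol_kempe_swap_out.
Qed.

Lemma fan_missing_twice j i a : i < j -> j < size ys -> 1 <= a <= D ->
  ncol g (nth x ys i) a = 0 -> ncol g (nth x ys j) a = 0 -> False.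
Proof.
elim/ltn_ind: j i a => j IH i a ij js ha hia hja.
have IHj : no_shared_missing j.
  move=> l i' a' nl lj ij' ha' h1 h2.
  case: (ltngtP l i') nl => // hl _.
    exact: (IH i' ij' l a' hl (ltn_trans ij' js) ha' h1 h2).
  exact: (IH l lj i' a' hl (ltn_trans lj js) ha' h2 h1).
case: (g_fan) => s0 _ ad hi _.
have [c [hc hxc]] := exists_missing_col (optimal_proper g_opt) (or_introl (nhigh_gt0 (ad 0 s0) hi)).
case: (boolP (K g a c x (nth x ys i))) => Ki.
  exact: (fan_missing_twice_chain IHj ij js ha hc hxc hia hja Ki).
exact: (fan_missing_twice_nochain IHj ij js ha hc hxc hia Ki).
Qed.

End FanMissing.

(* Swapping the low color of [x y_1] with the high color of [x y_0] on the chain of [y_0]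
   moves the high color onto [x y_1]. *)
Lemma fan_rotate1 g x ys : optimal g -> fan g x ys -> 1 < size ys ->
  exists g1, optimal g1 /\ fan g1 x (behead ys).
Proof.
move=> sg fg s1.
have pr := optimal_proper sg.
have Dt := fan_Delta_lt pr fg.
case: (fg) => s0 u0 ad hi co.
have [hb hb0] := co 0 s1.
set y0 := nth x ys 0 in hi hb0.
set b := g [set x; nth x ys 1] in hb hb0.
set c := g [set x; y0] in hi.
have /andP [c1 ct] := proper_col_range pr (ad 0 s0).
have /andP [b1 bD] := hb.
have hbt : 1 <= b <= t by rewrite b1 (leq_trans bD (ltnW Dt)).
have hct : 1 <= c <= t by rewrite c1 ct.
have hy0c : ncol g y0 c = 1.
  by apply: (ncol_eq1 e_irr pr (u := x)); [rewrite e_sym; apply: ad | rewrite set2C].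
have sg1 := optimal_kempe_swap sg hbt hct
  (excess_kempe_swap_missing e_sym e_irr pr bD hi hb0 hy0c).
exists (kempe_swap g b c y0); split => //.
have Kx : K g b c y0 x by apply: connect1; rewrite /abrel e_sym ad // set2C eqxx orbT.
have szb : size (behead ys) = (size ys).-1 by rewrite size_behead.
split; rewrite ?szb -?subn1 ?subn_gt0 //.
- by move: u0; case: (ys) => //= ? ? /andP [].
- by move=> i hi'; rewrite nth_behead; apply: ad; lia.
- by rewrite nth_behead kempe_swap_in // /swap_col eqxx.
move=> i hi'; rewrite !nth_behead.
have hi2 : i.+2 < size ys by lia.
have [h1 h2] := co _ hi2.
have n1 : g [set x; nth x ys i.+2] != b by apply: (fan_col_neq pr fg).
have n2 : g [set x; nth x ys i.+2] != c.
  by rewrite neq_ltn (leq_ltn_trans (proj2 (andP h1)) hi).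
by rewrite kempe_swap_id // ncol_kempe_swap_id.
Qed.

Lemma fan_rotate n : forall g x ys, size ys = n.+1 -> optimal g -> fan g x ys ->
  exists g', optimal g' /\ D < g' [set x; nth x ys n].
Proof.
elim: n => [|n IH] g x ys sz sg fg; first by exists g; split => //; case: fg.
have s1 : 1 < size ys by rewrite sz.
have [g1 [sg1 fg1]] := fan_rotate1 sg fg s1.
have szb : size (behead ys) = n.+1 by rewrite size_behead sz.
have [g' [sg' hg']] := IH g1 x (behead ys) szb sg1 fg1.
by exists g'; split => //; rewrite -nth_behead.
Qed.

(* A color missing at the last vertex [y_n] is present at [x], and the edge of [x] with
   that color leaves the fan, since distinct fan vertices share no missing color. *)
Lemma fan_extend g x ys n : optimal g -> fan g x ys -> size ys = n.+1 ->
  (n = 0 \/ deg e (nth x ys n) < D) -> exists u, fan g x (rcons ys u).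
Proof.
move=> sg fg sz hnd.
have pr := optimal_proper sg.
case: (fg) => s0 _ ad hi co.
have hn : n < size ys by rewrite sz.
have [bt [hbt hbm]] : exists a, 1 <= a <= D /\ ncol g (nth x ys n) a = 0.
  apply: (exists_missing_col pr); case: hnd => [n0|]; [left | by right].
  by rewrite n0; apply: (nhigh_gt0 (y := x)); [rewrite e_sym; apply: ad | rewrite set2C].
have hxb : 0 < ncol g x bt.
  by rewrite lt0n; apply/eqP => h; apply: (fan_missing_root sg fg hn hbt h hbm).
have [u [hu hcu]] := ncol_gt0 hxb.
have nu : u \notin ys.
  apply/negP => uin.
  have hk := index_mem u ys; rewrite uin in hk.
  have hnk := nth_index x uin.
  move: hk hnk; case: (index u ys) => [|k] hk hnk.
    by move: hi; rewrite hnk hcu ltnNge; case/andP: hbt => _ ->.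
  have [_ hm] := co k hk; rewrite hnk hcu in hm.
  have kn : k < n by rewrite -ltnS -sz.
  exact: (fan_missing_twice sg fg kn hn hbt hm hbm).
by exists u; apply: fan_rcons; rewrite ?hcu ?sz.
Qed.

Lemma fan_to_max_deg g x y0 : optimal g -> e x y0 -> D < g [set x; y0] ->
  exists ys, [/\ fan g x ys, nth x ys 0 = y0, 1 < size ys &
                 deg e (nth x ys (size ys).-1) = D].
Proof.
move=> sg hxy hc.
suff [[ys [fg _ sz]]|//] : (exists ys, [/\ fan g x ys, nth x ys 0 = y0 & size ys = #|T|.+1]) \/
   (exists ys, [/\ fan g x ys, nth x ys 0 = y0, 1 < size ys &
                 deg e (nth x ys (size ys).-1) = D]).
  case: fg => _ u0 _ _ _; have := max_card (mem ys).
  by move/card_uniqP: u0 => ->; rewrite sz ltnn.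
elim: #|T| => [|n [[ys [fg h0 sz]]|]]; [left | | by right].
  by exists [:: y0]; split => //; split => //; case.
case: (boolP ((0 < n) && (deg e (nth x ys n) == D))) => [/andP [n0 /eqP hd]|hnd].
  by right; exists ys; split => //; rewrite sz.
have [u fu] : exists u, fan g x (rcons ys u).
  apply: (fan_extend sg fg sz); case: n hnd {sz} => [|n]; [left | right] => //.
  by rewrite ltn_neqAle deg_le_Delta andbT; move: hnd.
left; exists (rcons ys u); split => //; last by rewrite size_rcons sz.
by rewrite nth_rcons; case: (fg) => -> *.
Qed.

Lemma high_edge_rotate g x y : optimal g -> e x y -> D < g [set x; y] ->
  exists z g', [/\ z != y, e x z, deg e z = D, optimal g' & D < g' [set x; z]].
Proof.
move=> sg hxy hc.
have [ys [fg h0 s1 hd]] := fan_to_max_deg sg hxy hc.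
have [s0 u0 ad _ _] := fg.
have hk : (size ys).-1 < size ys by case: (size ys) s1.
have [g' [sg' hg']] := fan_rotate (esym (prednK (ltnW s1))) sg fg.
exists (nth x ys (size ys).-1), g'; split => //; last exact: ad.
by rewrite -h0 nth_uniq //; case: (size ys) s1 => [|[|n]].
Qed.

Lemma optimal_excess0 : max_deg_acyclic e -> excess f0 = 0.
Proof.
move=> acyc; apply/eqP; rewrite -leqn0 leqNgt; apply/negP.
move=> /sum_gt0P [w /sum_gt0P [u]]; rewrite lt0b => /andP [hwu hc].
pose P z := deg e z = D /\ exists g y, [/\ optimal g, e z y & D < g [set z; y]].
have Pedge g z y : optimal g -> e y z -> deg e z = D -> D < g [set y; z] -> P z.
  by move=> sg hyz hdz hg; split => //; exists g, y; rewrite e_sym set2C.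
have sf0 : optimal f0 by split; [exact: rt_refl | exact: leqnn].
have [z [g' [_ hwz hdz sg' hg']]] := high_edge_rotate sf0 hwu hc.
have P_two_nbrs v : P v -> exists a b, [/\ a != b, e v a, e v b, P a & P b].
  move=> [hdv [g [y [sg hvy hg]]]].
  have [a [g1 [ay hva hda sg1 hg1]]] := high_edge_rotate sg hvy hg.
  have [b [g2 [ba hvb hdb sg2 hg2]]] := high_edge_rotate sg1 hva hg1.
  exists a, b; split => //; [by rewrite eq_sym | exact: Pedge sg1 _ _ hg1 | exact: Pedge sg2 _ _ hg2].
have [s [us ss Ps cs]] := exists_cycle e_sym e_irr P_two_nbrs (Pedge _ _ _ sg' hwz hdz hg').
have all_max : all (fun y => deg e y == D) s by apply/allP => y /Ps [-> _].
by move/negP: (acyc s us ss all_max); apply.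
Qed.

End Optimal.

Theorem proposition3p1 (T : finType) (e : rel T)
  (e_sym : symmetric e) (e_irr : irreflexive e) :
  @max_deg_acyclic T e ->
  forall (t : nat), @Delta T e < t ->
  forall f : coloring T, @proper_coloring T e t f ->
  exists g : coloring T,
    clos_refl_trans (coloring T) (@kempe_step T e t) f g /\
    @proper_coloring T e (@Delta T e) g.
Proof.
move=> acyc t _ f prf.
have [g [fg gmin]] := rt_argmin (kempe_step e t) (excess e) f.
have prg := kempe_reach_proper e_sym prf fg.
exists g; split => //.
exact: excess0_proper prg (optimal_excess0 e_sym e_irr prg gmin acyc).
Qed.
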